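(* Let $\mathbf{p}_0,\mathbf{p}_1,\dots,\mathbf{p}_n$ be points in $\mathbb{R}^2$ with $\mathbf{c}_i=\mathbf{p}_{i+1}-\mathbf{p}_i\neq\mathbf{0}$ for $0\le i\le n-1$. For each $i$, let an arc from $\mathbf{p}_i$ to $\mathbf{p}_{i+1}$ with signed angle $\theta_i\in(-2\pi,2\pi)$ be given (a straight segment if $\theta_i=0$). Assume the resulting curve is an arc spline: for every $1\le i\le n-1$, the unit tangent vector of arc $i-1$ at its endpoint $\mathbf{p}_i$ equals the unit tangent vector of arc $i$ at its start point $\mathbf{p}_i$ (both taken in the direction of traversal). For $1\le j\le n-1$, let $\gamma_j\in(-\pi,\pi]$ be the signed exterior angle at $\mathbf{p}_j$, i.e. the signed angle from $\mathbf{c}_{j-1}$ to $\mathbf{c}_j$, so that $\tan\gamma_j=\frac{\tilde{\mathbf{c}}_{j-1}\cdot\mathbf{c}_j}{\mathbf{c}_{j-1}\cdot\mathbf{c}_j}$. Then for every $0\le i\le n-1$, $$\theta_i\equiv(-1)^i\left[\theta_0+2\sum_{j=1}^{i}(-1)^j\gamma_j\right]\pmod{4\pi}.$$ Thus each $\theta_i$ is determined by $\theta_0$ and the exterior angles $\gamma_1,\dots,\gamma_i$ of the polygonal curve.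
   Context: For a vector $\mathbf{a}=(a_1,a_2)\in\mathbb{R}^2$, $\tilde{\mathbf{a}}=(-a_2,a_1)$ denotes its counterclockwise rotation by $\pi/2$, and $\mathbf{a}\cdot\mathbf{b}$ is the standard dot product. The signed enclosed angle $\theta$ of a circular arc from $A$ to $B$ with center $C$ is defined as follows: the arc consists of the points obtained by rotating $A$ about $C$ through the angles $\varphi$ between $0$ and $\theta$, and the rotation through $\theta$ takes $A$ to $B$. Thus $\theta>0$ means the arc is traversed counterclockwise and $\theta<0$ means it is traversed clockwise. The value $\theta=0$ corresponds to the straight segment. *)

From Stdlib Require Import Reals Lra.
From Coquelicot Require Import Coquelicot.
Open Scope R_scope.

Definition vec := (R * R)%type.

Definition vadd (a b : vec) : vec := (fst a + fst b, snd a + snd b).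
Definition vsub (a b : vec) : vec := (fst a - fst b, snd a - snd b).
Definition vscale (k : R) (a : vec) : vec := (k * fst a, k * snd a).
(* counterclockwise rotation by pi/2 : a~ = (-a2, a1) *)
Definition vperp (a : vec) : vec := (- snd a, fst a).
Definition dot (a b : vec) : R := fst a * fst b + snd a * snd b.
Definition vnorm (a : vec) : R := sqrt (dot a a).
Definition vunit (a : vec) : vec := vscale (/ vnorm a) a.

Definition rot (t : R) (a : vec) : vec :=
  (cos t * fst a - sin t * snd a, sin t * fst a + cos t * snd a).

Definition arc_curve (A B C : vec) (th : R) (t : R) : vec :=
  if Req_EM_T th 0 then vadd A (vscale t (vsub B A))
  else vadd C (rot (t * th) (vsub A C)).

Definition arc_vel (A B C : vec) (th : R) (t : R) : vec :=
  (Derive (fun s => fst (arc_curve A B C th s)) t,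
   Derive (fun s => snd (arc_curve A B C th s)) t).

Definition tangent_start (A B C : vec) (th : R) : vec := vunit (arc_vel A B C th 0).
Definition tangent_end (A B C : vec) (th : R) : vec := vunit (arc_vel A B C th 1).

Definition signed_angle (a b : vec) (g : R) : Prop :=
  - PI < g <= PI /\ rot g (vunit a) = vunit b.

Fixpoint alt_sum (g : nat -> R) (i : nat) : R :=
  match i with
  | O => 0
  | S k => alt_sum g k + (-1) ^ (S k) * g (S k)
  end.

(* The unit tangents of an arc with signed angle th are the direction of its
   chord rotated by -th/2 (at the start) and by +th/2 (at the end).  So G^1
   continuity at p_i says rot (th_{i-1}/2) u_{i-1} = rot (-th_i/2) u_i for the
   chord directions u_j, while u_i = rot gamma_i u_{i-1}.  Hence
   th_{i-1}/2 + th_i/2 - gamma_i is a multiple of 2 pi, i.e.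
   th_i = 2 gamma_i - th_{i-1} (mod 4 pi), and the claim follows by induction. *)

From Stdlib Require Import Reals Lra Lia.
From Coquelicot Require Import Coquelicot.
Open Scope R_scope.

Lemma cos_eq_1_inv t : cos t = 1 -> exists k : Z, t = 2 * PI * IZR k.
Proof.
  intro Hcos. replace t with (2 * (t / 2)) in Hcos by field.
  rewrite cos_2a_sin in Hcos.
  assert (Hsin : sin (t / 2) = 0) by nra.
  destruct (sin_eq_0_0 _ Hsin) as [k Hk]. exists k. lra.
Qed.

Lemma rot_0 v : rot 0 v = v.
Proof. destruct v; unfold rot; simpl; rewrite cos_0, sin_0; f_equal; ring. Qed.

Lemma rot_plus a b v : rot a (rot b v) = rot (a + b) v.
Proof. destruct v; unfold rot; simpl; rewrite cos_plus, sin_plus; f_equal; ring. Qed.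

Lemma rot_vscale a k v : rot a (vscale k v) = vscale k (rot a v).
Proof. destruct v; unfold rot, vscale; simpl; f_equal; ring. Qed.

Lemma vperp_rot a v : vperp (rot a v) = rot a (vperp v).
Proof. destruct v; unfold rot, vperp; simpl; f_equal; ring. Qed.

Lemma vnorm_rot a v : vnorm (rot a v) = vnorm v.
Proof.
  destruct v as [x y]; unfold vnorm, dot, rot; simpl; f_equal.
  pose proof (sin2_cos2 a) as Hsc; unfold Rsqr in Hsc.
  transitivity ((sin a * sin a + cos a * cos a) * (x * x + y * y)); [ring|].
  rewrite Hsc; ring.
Qed.

Lemma vunit_rot a v : vunit (rot a v) = rot a (vunit v).
Proof. unfold vunit; rewrite vnorm_rot, rot_vscale; reflexivity. Qed.

Lemma vnorm_vscale k v : 0 <= k -> vnorm (vscale k v) = k * vnorm v.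
Proof.
  intro Hk; destruct v as [x y]; unfold vnorm, dot, vscale; simpl.
  replace (k * x * (k * x) + k * y * (k * y)) with ((k * k) * (x * x + y * y)) by ring.
  rewrite sqrt_mult_alt by nra. rewrite sqrt_square by lra. reflexivity.
Qed.

Lemma vunit_vscale_pos k v : 0 < k -> vunit (vscale k v) = vunit v.
Proof.
  intro Hk; unfold vunit; rewrite vnorm_vscale by lra.
  destruct v as [x y]; unfold vscale; simpl.
  destruct (Req_dec (vnorm (x, y)) 0) as [E|E].
  - rewrite E, Rmult_0_r, Rinv_0; f_equal; ring.
  - f_equal; field; lra.
Qed.

Lemma vunit_vscale_same_sign a b v :
  0 < a * b -> vunit (vscale a v) = vunit (vscale b v).
Proof.
  intro Hab. assert (Hb : b <> 0) by (intro; subst; lra).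
  replace (vscale a v) with (vscale (a / b) (vscale b v)).
  - apply vunit_vscale_pos. replace (a / b) with (a * b / (b * b)) by (field; lra).
    apply Rdiv_lt_0_compat; nra.
  - destruct v; unfold vscale; simpl; f_equal; field; lra.
Qed.

Lemma dot_vunit a : a <> (0, 0) -> dot (vunit a) (vunit a) = 1.
Proof.
  intro Ha. destruct a as [x y].
  assert (Hpos : x * x + y * y > 0).
  { destruct (Req_dec x 0), (Req_dec y 0); subst; try nra. exfalso; auto. }
  unfold vunit, vnorm, dot, vscale; simpl.
  assert (Hsq := sqrt_sqrt (x * x + y * y) ltac:(lra)).
  assert (Hr := sqrt_lt_R0 (x * x + y * y) Hpos).
  set (r := sqrt (x * x + y * y)) in *.
  replace (/ r * x * (/ r * x) + / r * y * (/ r * y)) with ((x * x + y * y) / (r * r))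
    by (field; lra).
  rewrite Hsq. field. lra.
Qed.

Lemma rot_fixed_angle t u :
  0 < dot u u -> rot t u = u -> exists k : Z, t = 2 * PI * IZR k.
Proof.
  destruct u as [x y]; unfold dot, rot; simpl; intros Hu Hfix.
  injection Hfix as E1 E2.
  apply cos_eq_1_inv.
  assert (Hcos : cos t * (x * x + y * y) = x * x + y * y).
  { transitivity (x * (cos t * x - sin t * y) + y * (sin t * x + cos t * y)); [ring|].
    rewrite E1, E2; ring. }
  nra.
Qed.

Lemma arc_vel_segment A B C t : arc_vel A B C 0 t = vsub B A.
Proof.
  unfold arc_vel, arc_curve.
  destruct (Req_EM_T 0 0) as [_|E]; [|lra].
  destruct A, B; unfold vadd, vsub, vscale; simpl.
  f_equal; apply is_derive_unique; auto_derive; auto; ring.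
Qed.

Lemma arc_vel_rotation A B C th t : th <> 0 ->
  arc_vel A B C th t = vscale th (vperp (rot (t * th) (vsub A C))).
Proof.
  intro Hth. unfold arc_vel, arc_curve.
  destruct (Req_EM_T th 0) as [E|_]; [contradiction|].
  destruct A, C; unfold vadd, rot, vsub, vscale, vperp; simpl.
  f_equal; apply is_derive_unique; auto_derive; auto; ring.
Qed.

Lemma rot_sub_chord th w :
  vsub (rot th w) w = vscale (2 * sin (th / 2)) (rot (th / 2) (vperp w)).
Proof.
  destruct w; unfold vsub, rot, vscale, vperp; simpl.
  replace th with (2 * (th / 2)) at 1 2 3 4 by field.
  rewrite cos_2a_sin, sin_2a. f_equal; ring.
Qed.

(* On (-2 pi, 2 pi), sin (th/2) has the sign of th, so the velocity and the
   chord differ by a positive factor once the velocity is rotated back. *)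
Lemma vunit_arc_vel A B C th t :
  - (2 * PI) < th < 2 * PI ->
  (th <> 0 -> vadd C (rot th (vsub A C)) = B) ->
  vunit (arc_vel A B C th t) = rot ((t - / 2) * th) (vunit (vsub B A)).
Proof.
  intros Hrange Hend.
  destruct (Req_dec th 0) as [->|Hth].
  - rewrite arc_vel_segment, Rmult_0_r, rot_0. reflexivity.
  - assert (Hchord : vsub B A = vsub (rot th (vsub A C)) (vsub A C)).
    { rewrite <- (Hend Hth). destruct A, C; unfold vsub, vadd; simpl.
      destruct (rot th _); simpl; f_equal; ring. }
    assert (Hsign : 0 < th * (2 * sin (th / 2))).
    { destruct (Rlt_dec 0 th).
      - assert (0 < sin (th / 2)) by (apply sin_gt_0; lra). nra.
      - assert (sin (th / 2) < 0) by (apply sin_lt_0_var; lra). nra. }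
    rewrite arc_vel_rotation, Hchord, rot_sub_chord, vperp_rot by exact Hth.
    replace (t * th) with ((t - / 2) * th + th / 2) by field.
    rewrite <- rot_plus, <- (rot_vscale ((t - / 2) * th)), vunit_rot,
      (vunit_vscale_same_sign _ _ _ Hsign).
    reflexivity.
Qed.

Lemma arc_spline_joint A B D C0 C1 th0 th1 g :
  vsub B A <> (0, 0) ->
  - (2 * PI) < th0 < 2 * PI -> - (2 * PI) < th1 < 2 * PI ->
  (th0 <> 0 -> vadd C0 (rot th0 (vsub A C0)) = B) ->
  (th1 <> 0 -> vadd C1 (rot th1 (vsub B C1)) = D) ->
  tangent_end A B C0 th0 = tangent_start B D C1 th1 ->
  signed_angle (vsub B A) (vsub D B) g ->
  exists k : Z, th1 = 2 * g - th0 + 4 * PI * IZR k.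
Proof.
  intros HAB Hth0 Hth1 Hend0 Hend1 Htan [_ Hg].
  unfold tangent_start, tangent_end in Htan.
  rewrite (vunit_arc_vel _ _ _ _ _ Hth0 Hend0), (vunit_arc_vel _ _ _ _ _ Hth1 Hend1),
    <- Hg, rot_plus in Htan.
  set (u := vunit (vsub B A)) in *.
  assert (Hfix : rot (th0 / 2 + th1 / 2 - g) u = u).
  { replace (th0 / 2 + th1 / 2 - g) with (th1 / 2 - g + (1 - / 2) * th0) by field.
    rewrite <- rot_plus, Htan, rot_plus.
    replace (th1 / 2 - g + ((0 - / 2) * th1 + g)) with 0 by field. apply rot_0. }
  assert (Hu : 0 < dot u u) by (unfold u; rewrite dot_vunit by exact HAB; lra).
  destruct (rot_fixed_angle _ _ Hu Hfix) as [k Hk].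
  exists k. lra.
Qed.

Lemma alt_sum_S_sign t0 g m :
  (-1) ^ S m * (t0 + 2 * alt_sum g (S m))
  = 2 * g (S m) - (-1) ^ m * (t0 + 2 * alt_sum g m).
Proof.
  assert (Hsq : (-1) ^ m * (-1) ^ m = 1).
  { rewrite <- Rpow_mult_distr. replace (-1 * -1) with 1 by ring. apply pow1. }
  assert (Hdiff : (-1) ^ S m * (t0 + 2 * alt_sum g (S m))
                  - (2 * g (S m) - (-1) ^ m * (t0 + 2 * alt_sum g m))
                  = 2 * g (S m) * ((-1) ^ m * (-1) ^ m - 1)) by (simpl; ring).
  rewrite Hsq in Hdiff. lra.
Qed.

Theorem theorem5 (n : nat) (p : nat -> vec) (theta : nat -> R)
  (C : nat -> vec) (gamma : nat -> R) :
  (* c_i = p_{i+1} - p_i <> 0 *)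
  (forall i, (i < n)%nat -> vsub (p (S i)) (p i) <> (0, 0)) ->
  (* theta_i in (-2 pi, 2 pi) *)
  (forall i, (i < n)%nat -> - (2 * PI) < theta i < 2 * PI) ->
  (* C_i is the center of arc i: rotating p_i about C_i by theta_i gives p_{i+1} *)
  (forall i, (i < n)%nat -> theta i <> 0 ->
     vadd (C i) (rot (theta i) (vsub (p i) (C i))) = p (S i)) ->
  (* arc spline: G^1 continuity of unit tangents at interior points *)
  (forall i, (1 <= i)%nat -> (i <= n - 1)%nat ->
     tangent_end (p (i - 1)%nat) (p i) (C (i - 1)%nat) (theta (i - 1)%nat)
     = tangent_start (p i) (p (S i)) (C i) (theta i)) ->
  (* gamma_j = signed exterior angle from c_{j-1} to c_j *)
  (forall j, (1 <= j)%nat -> (j <= n - 1)%nat ->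
     signed_angle (vsub (p j) (p (j - 1)%nat)) (vsub (p (S j)) (p j)) (gamma j)) ->
  forall i, (i < n)%nat ->
    exists k : Z,
      theta i = (-1) ^ i * (theta 0%nat + 2 * alt_sum gamma i) + 4 * PI * IZR k.
Proof.
  intros Hchord Hrange Hcenter Htangent Hgamma i.
  induction i as [|m IH]; intro Hi.
  - exists 0%Z. simpl. ring.
  - destruct (IH ltac:(lia)) as [k1 Hk1].
    assert (Hlo : (1 <= S m)%nat) by lia.
    assert (Hhi : (S m <= n - 1)%nat) by lia.
    pose proof (Htangent _ Hlo Hhi) as Hjoint.
    pose proof (Hgamma _ Hlo Hhi) as Hangle.
    replace (S m - 1)%nat with m in Hjoint, Hangle by lia.
    destruct (arc_spline_joint _ _ _ _ _ _ _ _ (Hchord m ltac:(lia))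
                (Hrange m ltac:(lia)) (Hrange (S m) Hi)
                (Hcenter m ltac:(lia)) (Hcenter (S m) Hi) Hjoint Hangle) as [k2 Hk2].
    exists (k2 - k1)%Z.
    rewrite Hk2, alt_sum_S_sign, Hk1, minus_IZR. ring.
Qed.
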